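(* Every countably compact hereditarily normal topological group that contains a non-trivial convergent sequence is metrizable.
   Context: All spaces are assumed to be $T_1$. A non-trivial convergent sequence is a subspace homeomorphic to the subspace $\{0\}\cup\{1/n : n=1,2,3,\dots\}$ of the real line. *)

From Stdlib Require Import Reals.
Open Scope R_scope.

Record is_topology {X : Type} (op : (X -> Prop) -> Prop) : Prop := {
  top_full  : op (fun _ => True);
  top_inter : forall U V, op U -> op V -> op (fun x => U x /\ V x);
  top_union : forall F : (X -> Prop) -> Prop,
      (forall U, F U -> op U) -> op (fun x => exists U, F U /\ U x)
}.

Definition is_closed {X : Type} (op : (X -> Prop) -> Prop) (C : X -> Prop) : Prop :=
  op (fun x => ~ C x).

Definition T1 {X : Type} (op : (X -> Prop) -> Prop) : Prop :=
  forall x y : X, x <> y -> exists U, op U /\ U x /\ ~ U y.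

Definition subspace_open {X : Type} (op : (X -> Prop) -> Prop) (A : X -> Prop)
  (W : {x : X | A x} -> Prop) : Prop :=
  exists U, op U /\ forall a : {x : X | A x}, W a <-> U (proj1_sig a).

Definition product_open {X Y : Type} (opX : (X -> Prop) -> Prop)
  (opY : (Y -> Prop) -> Prop) (W : X * Y -> Prop) : Prop :=
  forall p, W p -> exists U V, opX U /\ opY V /\ U (fst p) /\ V (snd p) /\
    forall x y, U x -> V y -> W (x, y).

Definition continuous {X Y : Type} (opX : (X -> Prop) -> Prop)
  (opY : (Y -> Prop) -> Prop) (f : X -> Y) : Prop :=
  forall V, opY V -> opX (fun x => V (f x)).

Definition homeomorphic {X Y : Type} (opX : (X -> Prop) -> Prop)
  (opY : (Y -> Prop) -> Prop) : Prop :=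
  exists (f : X -> Y) (g : Y -> X),
    (forall x, g (f x) = x) /\ (forall y, f (g y) = y) /\
    continuous opX opY f /\ continuous opY opX g.

Record is_topological_group {X : Type} (op : (X -> Prop) -> Prop)
  (mul : X -> X -> X) (inv : X -> X) (e : X) : Prop := {
  tg_top     : is_topology op;
  tg_assoc   : forall x y z, mul x (mul y z) = mul (mul x y) z;
  tg_unit_l  : forall x, mul e x = x;
  tg_unit_r  : forall x, mul x e = x;
  tg_inv_l   : forall x, mul (inv x) x = e;
  tg_inv_r   : forall x, mul x (inv x) = e;
  tg_mul_cont : continuous (product_open op op) op (fun p => mul (fst p) (snd p));
  tg_inv_cont : continuous op op inv
}.

Definition countably_compact {X : Type} (op : (X -> Prop) -> Prop) : Prop :=
  forall U : nat -> (X -> Prop),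
    (forall n, op (U n)) -> (forall x, exists n, U n x) ->
    exists N, forall x, exists n, (n <= N)%nat /\ U n x.

(** Normality of a space (separation of disjoint closed sets by disjoint open
    sets; T1 is a standing assumption and is imposed separately). *)
Definition normal {X : Type} (op : (X -> Prop) -> Prop) : Prop :=
  forall F G : X -> Prop, is_closed op F -> is_closed op G ->
    (forall x, F x -> G x -> False) ->
    exists U V, op U /\ op V /\ (forall x, F x -> U x) /\ (forall x, G x -> V x) /\
      (forall x, U x -> V x -> False).

Definition hereditarily_normal {X : Type} (op : (X -> Prop) -> Prop) : Prop :=
  forall A : X -> Prop, normal (subspace_open op A).

Definition R_open (U : R -> Prop) : Prop :=
  forall x, U x -> exists eps, eps > 0 /\ forall y, Rabs (y - x) < eps -> U y.

Definition conv_seq_set (x : R) : Prop :=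
  x = 0 \/ exists n : nat, (n >= 1)%nat /\ x = / INR n.

Definition has_nontrivial_convergent_sequence {X : Type}
  (op : (X -> Prop) -> Prop) : Prop :=
  exists A : X -> Prop,
    homeomorphic (subspace_open R_open conv_seq_set) (subspace_open op A).

Definition metrizable {X : Type} (op : (X -> Prop) -> Prop) : Prop :=
  exists d : X -> X -> R,
    (forall x y, d x y = 0 <-> x = y) /\
    (forall x y, d x y = d y x) /\
    (forall x y z, d x z <= d x y + d y z) /\
    (forall U, op U <-> forall x, U x -> exists eps, eps > 0 /\
                                   forall y, d x y < eps -> U y).

(* Let s_n -> a be a non-trivial convergent sequence in G.
   1. In the subspace G \ {a} the even-indexed and the odd-indexed terms form
      disjoint closed sets; hereditary normality separates them by open sets
      N_even, N_odd.  For each half, separating its terms from the complement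
      of its neighbourhood inside G \ {a} and translating by s_n a^-1 yields
      countably many neighbourhoods of a whose intersection lies in
      N_even ∪ {a}, resp. N_odd ∪ {a}.  Hence {a} is a G_delta set.
   2. In a countably compact normal T1 space a G_delta point has a countable
      local base (a finite-subcover argument).
   3. By homogeneity e also has a countable local base, and a first-countable
      T1 topological group is metrizable (Birkhoff–Kakutani): from a nested
      base B_0 ⊇ B_1 ⊇ ... with B_(k+1)^3 ⊆ B_k one builds the dyadic norm
      |g| = 2^-m (m least with g ∉ B_m), and the chain metric of the
      quasi-metric |x^-1 y| is a genuine metric inducing the topology. *)

From Stdlib Require Import Reals Lra Lia List Wf_nat.
From Stdlib Require Import Classical ClassicalEpsilon FunctionalExtensionality
  PropExtensionality ProofIrrelevance.
Open Scope R_scope.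

Arguments top_full {X op} _.
Arguments top_inter {X op} _ _ _ _ _.
Arguments top_union {X op} _ _ _.

Definition hausdorff {X : Type} (op : (X -> Prop) -> Prop) : Prop :=
  forall x y, x <> y -> exists U V, op U /\ op V /\ U x /\ V y /\
    forall z, U z -> V z -> False.

Definition closed_off {X : Type} (op : (X -> Prop) -> Prop) (a : X) (F : X -> Prop) : Prop :=
  exists C, op C /\ forall x, x <> a -> (~ F x <-> C x).

Definition converges {X : Type} (op : (X -> Prop) -> Prop) (s : nat -> X) (a : X) : Prop :=
  forall W, op W -> W a -> exists N, forall n, (N <= n)%nat -> W (s n).

Definition gdelta_point {X : Type} (op : (X -> Prop) -> Prop) (a : X) : Prop :=
  exists W : nat -> X -> Prop, (forall k, op (W k) /\ W k a) /\
    forall y, y <> a -> exists k, ~ W k y.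

Definition local_base {X : Type} (op : (X -> Prop) -> Prop) (a : X) (D : nat -> X -> Prop) : Prop :=
  (forall n, op (D n) /\ D n a) /\ forall U, op U -> U a -> exists n, forall x, D n x -> U x.

Definition first_countable_at {X : Type} (op : (X -> Prop) -> Prop) (a : X) : Prop :=
  exists D, local_base op a D.

Section OpenSets.
Context {X : Type} (op : (X -> Prop) -> Prop).

Lemma op_ext (U V : X -> Prop) : (forall x, U x <-> V x) -> op U -> op V.
Proof.
  intros H HU. replace V with U; auto.
  apply functional_extensionality; intro x; apply propositional_extensionality; auto.
Qed.

Hypothesis T : is_topology op.

Lemma op_local (U : X -> Prop) :
  (forall x, U x -> exists V, op V /\ V x /\ forall y, V y -> U y) -> op U.
Proof.
  intros H.
  apply (op_ext (fun x => exists V, (op V /\ forall y, V y -> U y) /\ V x)).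
  - intro x; split.
    + intros [V [[_ HV] Vx]]; auto.
    + intro Ux. destruct (H x Ux) as [V [oV [Vx HV]]]. exists V; auto.
  - apply (top_union T). intros V [oV _]; auto.
Qed.

Lemma op_finite_inter (P : nat -> X -> Prop) :
  (forall k, op (P k)) -> forall N, op (fun x => forall k, (k <= N)%nat -> P k x).
Proof.
  intros HP N; induction N as [|N IH].
  - apply (op_ext (P 0%nat)); [|auto].
    intro x; split; [intros Px k Hk; replace k with 0%nat by lia; auto|intro H; apply H; lia].
  - apply (op_ext (fun x => (forall k, (k <= N)%nat -> P k x) /\ P (S N) x)).
    + intro x; split.
      * intros [H1 H2] k Hk. destruct (Nat.eq_dec k (S N)); [subst; auto|apply H1; lia].
      * intro H; split; [intros k Hk; apply H; lia|apply H; lia].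
    + apply (top_inter T); auto.
Qed.

Hypothesis HT1 : T1 op.

Lemma op_neq (a : X) : op (fun x => x <> a).
Proof.
  apply op_local. intros x Hx.
  destruct (HT1 x a Hx) as [U [oU [Ux nUa]]]. exists U; repeat split; auto.
  intros y Uy E; subst; auto.
Qed.

Lemma avoid_finitely_many (s : nat -> X) (z : X) (N : nat) :
  exists V, op V /\ V z /\ forall n, (n <= N)%nat -> s n <> z -> ~ V (s n).
Proof.
  assert (Hsep : forall n, exists W, op W /\ W z /\ (s n <> z -> ~ W (s n))).
  { intro n. destruct (classic (s n = z)) as [E|Ne].
    - exists (fun _ => True). split; [apply (top_full T)|split; [auto|contradiction]].
    - destruct (HT1 z (s n) (not_eq_sym Ne)) as [W [oW [Wz nW]]]. exists W; auto. }
  destruct (choice _ Hsep) as [W HW].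
  exists (fun x => forall k, (k <= N)%nat -> W k x). split; [|split].
  - apply op_finite_inter; intro k; apply HW.
  - intros k _; apply HW.
  - intros n Hn Hne HV. apply (proj2 (proj2 (HW n)) Hne), HV; auto.
Qed.

Lemma normal_hausdorff : normal op -> hausdorff op.
Proof.
  intros HN x y Hxy.
  destruct (HN (fun z => z = x) (fun z => z = y)) as [U [V [oU [oV [HU [HV Hd]]]]]].
  - apply op_neq.
  - apply op_neq.
  - intros z -> ->; auto.
  - exists U, V; repeat split; auto.
Qed.

Lemma hereditarily_normal_normal : hereditarily_normal op -> normal op.
Proof.
  intros HN F H oF oH Hd.
  destruct (HN (fun _ => True) (fun z => F (proj1_sig z)) (fun z => H (proj1_sig z))) as
    [U' [V' [[U [oU HU]] [[V [oV HV]] [HFU [HHV HUV]]]]]].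
  - exists (fun x => ~ F x); split; auto; tauto.
  - exists (fun x => ~ H x); split; auto; tauto.
  - intros z; apply Hd.
  - exists U, V. repeat split; auto.
    + intros x Fx. apply (HU (exist _ x I)). apply HFU; auto.
    + intros x Hx. apply (HV (exist _ x I)). apply HHV; auto.
    + intros x Ux Vx. apply (HUV (exist _ x I)); [apply HU|apply HV]; auto.
Qed.

Lemma punctured_normal (a : X) : hereditarily_normal op ->
  forall F H : X -> Prop, closed_off op a F -> closed_off op a H ->
  (forall x, x <> a -> F x -> H x -> False) ->
  exists U V, op U /\ op V /\ (forall x, x <> a -> F x -> U x) /\
    (forall x, x <> a -> H x -> V x) /\ (forall x, U x -> V x -> False).
Proof.
  intros HN F H [CF [oCF HCF]] [CH [oCH HCH]] Hd.
  destruct (HN (fun x => x <> a) (fun z => F (proj1_sig z)) (fun z => H (proj1_sig z))) as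
    [U' [V' [[U [oU HU]] [[V [oV HV]] [HFU [HHV HUV]]]]]].
  - exists CF; split; auto. intros [x hx]; simpl; auto.
  - exists CH; split; auto. intros [x hx]; simpl; auto.
  - intros [x hx]; simpl; apply Hd; auto.
  - exists (fun x => x <> a /\ U x), (fun x => x <> a /\ V x).
    split; [apply (top_inter T); auto; apply op_neq|].
    split; [apply (top_inter T); auto; apply op_neq|].
    split; [intros x hx Fx; split; auto; apply (HU (exist _ x hx)); apply HFU; auto|].
    split; [intros x hx Hx; split; auto; apply (HV (exist _ x hx)); apply HHV; auto|].
    intros x [hx Ux] [_ Vx]. apply (HUV (exist _ x hx)); [apply HU|apply HV]; auto.
Qed.

Lemma sequence_terms_closed_off (s : nat -> X) (a : X) :
  hausdorff op -> converges op s a ->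
  forall I : nat -> Prop, closed_off op a (fun x => exists n, I n /\ x = s n).
Proof.
  intros HH Hconv I.
  exists (fun x => x <> a /\ ~ (exists n, I n /\ x = s n)). split; [|intros x hx; tauto].
  apply op_local. intros z [hz nE].
  destruct (HH z a hz) as [Uz [Ua [oUz [oUa [Uzz [Uaa Hd]]]]]].
  destruct (Hconv Ua oUa Uaa) as [N HN].
  destruct (avoid_finitely_many s z N) as [V [oV [Vz HV]]].
  exists (fun x => Uz x /\ V x). split; [apply (top_inter T); auto|]. split; [split; auto|].
  intros y [Uy Vy]. split.
  - intro; subst. apply (Hd a); auto.
  - intros [n [In ->]]. destruct (Compare_dec.le_lt_dec N n) as [h|h].
    + apply (Hd (s n)); auto.
    + destruct (classic (s n = z)) as [E|Ne].
      * apply nE; exists n; auto.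
      * apply (HV n); auto; lia.
Qed.

(* In a countably compact normal T1 space every G_delta point has a countable
   local base: separate a from the complements of the G_delta family, and use a
   finite subcover of a given neighbourhood together with these separators. *)
Lemma gdelta_first_countable (a : X) :
  normal op -> countably_compact op -> gdelta_point op a -> first_countable_at op a.
Proof.
  intros HN HC [W [HWa HWy]].
  assert (Hsep : forall n, exists PQ : (X -> Prop) * (X -> Prop),
     op (fst PQ) /\ op (snd PQ) /\ fst PQ a /\ (forall x, ~ W n x -> snd PQ x) /\
     (forall x, fst PQ x -> snd PQ x -> False)).
  { intro n. destruct (HN (fun x => x = a) (fun x => ~ W n x)) as [P [Q [oP [oQ [HP [HQ HPQ]]]]]].
    - apply op_neq.
    - apply (op_ext (W n)); [intro; tauto|apply HWa].
    - intros x -> H; apply H, HWa.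
    - exists (P, Q); simpl; auto. }
  destruct (choice _ Hsep) as [PQ HPQ].
  exists (fun N x => forall k, (k <= N)%nat -> fst (PQ k) x). split.
  - intro N; split; [apply op_finite_inter; intro k; apply HPQ|intros k _; apply HPQ].
  - intros U oU Ua.
    destruct (HC (fun n => match n with O => U | S m => snd (PQ m) end)) as [N HN'].
    + intros [|m]; [auto|apply HPQ].
    + intro x. destruct (classic (U x)) as [Ux|nUx]; [exists O; auto|].
      assert (x <> a) by (intro; subst; auto). destruct (HWy x H) as [k Hk].
      exists (S k). apply HPQ; auto.
    + exists N. intros g Dg. destruct (HN' g) as [[|m] [Hm Cg]]; auto.
      exfalso. apply (proj2 (proj2 (proj2 (proj2 (HPQ m)))) g); auto.
      apply Dg; lia.
Qed.

End OpenSets.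

Lemma nontrivial_sequence {X : Type} (op : (X -> Prop) -> Prop) :
  has_nontrivial_convergent_sequence op ->
  exists (s : nat -> X) (a : X), (forall n, s n <> a) /\
    (forall n m, s n = s m -> n = m) /\ converges op s a.
Proof.
  intros [A [f [g [Hgf [Hfg [Cf Cg]]]]]].
  assert (Hc : forall n, conv_seq_set (/ INR (S n))).
  { intro n; right; exists (S n); split; auto; lia. }
  assert (Hc0 : conv_seq_set 0) by (left; auto).
  set (c := fun n => exist conv_seq_set _ (Hc n)).
  set (c0 := exist conv_seq_set _ Hc0).
  assert (Hinj : forall u v, proj1_sig (f u) = proj1_sig (f v) -> proj1_sig u = proj1_sig v).
  { intros u v H. rewrite <- (Hgf u), <- (Hgf v). do 2 f_equal.
    destruct (f u) as [p pp], (f v) as [q pq]. simpl in H. subst q.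
    rewrite (proof_irrelevance _ pp pq); auto. }
  assert (Hpos : forall n, 0 < INR (S n)) by (intro n; apply lt_0_INR; lia).
  exists (fun n => proj1_sig (f (c n))), (proj1_sig (f c0)). split; [|split].
  - intros n H. apply Hinj in H. change (/ INR (S n) = 0) in H.
    apply (Rinv_neq_0_compat (INR (S n))); [pose proof (Hpos n); lra|auto].
  - intros n m H. apply Hinj in H. change (/ INR (S n) = / INR (S m)) in H.
    apply Rinv_eq_reg, INR_eq in H. lia.
  - intros W oW Wa.
    assert (oV : subspace_open op A (fun p => W (proj1_sig p))) by (exists W; split; auto; tauto).
    destruct (Cf _ oV) as [U [oU HU]].
    assert (U0 : U 0) by (apply (HU c0); auto).
    destruct (oU 0 U0) as [eps [Heps Hb]].
    destruct (archimed_cor1 eps Heps) as [N [HN HN0]].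
    exists N. intros n Hn. apply (HU (c n)). change (U (/ INR (S n))). apply Hb.
    rewrite Rminus_0_r, Rabs_right; [|left; apply Rinv_0_lt_compat; auto].
    eapply Rle_lt_trans; [|apply HN].
    apply Rinv_le_contravar; [apply lt_0_INR; lia|]. apply le_INR; lia.
Qed.

Arguments tg_top {X op mul inv e} _.
Arguments tg_assoc {X op mul inv e} _ _ _ _.
Arguments tg_unit_l {X op mul inv e} _ _.
Arguments tg_unit_r {X op mul inv e} _ _.
Arguments tg_inv_l {X op mul inv e} _ _.
Arguments tg_inv_r {X op mul inv e} _ _.
Arguments tg_mul_cont {X op mul inv e} _ _ _.
Arguments tg_inv_cont {X op mul inv e} _ _ _.

Section GroupBasics.
Context {X : Type} {op : (X -> Prop) -> Prop} {mul : X -> X -> X} {inv : X -> X} {e : X}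
  (G : is_topological_group op mul inv e).

Lemma inv_unique u v : mul u v = e -> v = inv u.
Proof.
  intros H.
  rewrite <- (tg_unit_l G v), <- (tg_inv_l G u), <- (tg_assoc G), H.
  apply (tg_unit_r G).
Qed.

Lemma inv_inv a : inv (inv a) = a.
Proof. symmetry. apply inv_unique, (tg_inv_l G). Qed.

Lemma inv_e : inv e = e.
Proof. symmetry; apply inv_unique, (tg_unit_l G). Qed.

Lemma inv_mul_sym x y : inv (mul (inv x) y) = mul (inv y) x.
Proof.
  symmetry. apply inv_unique.
  rewrite <- (tg_assoc G), (tg_assoc G y), (tg_inv_r G), (tg_unit_l G). apply (tg_inv_l G).
Qed.

Lemma mul_cancel_l x y : mul x (mul (inv x) y) = y.
Proof. rewrite (tg_assoc G), (tg_inv_r G). apply (tg_unit_l G). Qed.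

Lemma mul_cancel_r s a : mul (mul s (inv a)) a = s.
Proof. rewrite <- (tg_assoc G), (tg_inv_l G). apply (tg_unit_r G). Qed.

Lemma mul_telescope x y z w :
  mul (mul (mul (inv x) y) (mul (inv y) z)) (mul (inv z) w) = mul (inv x) w.
Proof.
  rewrite <- (tg_assoc G (inv x) y), mul_cancel_l.
  rewrite <- (tg_assoc G (inv x) z), mul_cancel_l. auto.
Qed.

Lemma op_ltrans c W : op W -> op (fun x => W (mul c x)).
Proof.
  intros oW. apply (op_local _ (tg_top G)). intros x Wx.
  destruct (tg_mul_cont G W oW (c, x) Wx) as [U [V [oU [oV [Uc [Vx H]]]]]].
  exists V; repeat split; auto. intros y Vy. apply (H c y); auto.
Qed.

Lemma op_rtrans c W : op W -> op (fun x => W (mul x c)).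
Proof.
  intros oW. apply (op_local _ (tg_top G)). intros x Wx.
  destruct (tg_mul_cont G W oW (x, c) Wx) as [U [V [oU [oV [Ux [Vc H]]]]]].
  exists U; repeat split; auto. intros y Uy. apply (H y c); auto.
Qed.

Lemma nbhd_square W : op W -> W e ->
  exists V, op V /\ V e /\ (forall a, V a -> W a) /\ forall a b, V a -> V b -> W (mul a b).
Proof.
  intros oW We.
  assert (We' : W (mul (fst (e, e)) (snd (e, e)))) by (simpl; rewrite (tg_unit_l G); auto).
  destruct (tg_mul_cont G W oW (e, e) We') as [U [V [oU [oV [Ue [Ve H]]]]]].
  pose proof (tg_top G) as T.
  exists (fun x => (U x /\ V x) /\ W x). repeat split; auto.
  - apply (top_inter T); auto. apply (top_inter T); auto.
  - intros a [_ Wa]; auto.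
  - intros a b [[Ua _] _] [[_ Vb] _]. apply H; auto.
Qed.

Lemma nbhd_cube W : op W -> W e ->
  exists V, op V /\ V e /\ (forall a, V a -> V (inv a)) /\
     forall a b c, V a -> V b -> V c -> W (mul (mul a b) c).
Proof.
  intros oW We.
  destruct (nbhd_square W oW We) as [V1 [oV1 [V1e [V1W H1]]]].
  destruct (nbhd_square V1 oV1 V1e) as [V2 [oV2 [V2e [V2V1 H2]]]].
  exists (fun a => V2 a /\ V2 (inv a)). split; [|split; [|split]].
  - apply (top_inter (tg_top G)); auto. apply (tg_inv_cont G); auto.
  - rewrite inv_e; auto.
  - intros a [H3 H4]; rewrite inv_inv; tauto.
  - intros a b c [Va _] [Vb _] [Vc _]. apply H1; auto.
Qed.

Lemma first_countable_translate a : first_countable_at op a -> first_countable_at op e.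
Proof.
  intros [D [HD Hb]].
  exists (fun n g => D n (mul a g)). split.
  - intro n. split; [apply op_ltrans; apply HD|]. rewrite (tg_unit_r G). apply HD.
  - intros U oU Ue.
    destruct (Hb (fun x => U (mul (inv a) x))) as [n Hn].
    + apply op_ltrans; auto.
    + rewrite (tg_inv_l G); auto.
    + exists n. intros g Dg. specialize (Hn _ Dg).
      rewrite (tg_assoc G), (tg_inv_l G), (tg_unit_l G) in Hn. auto.
Qed.

End GroupBasics.

Section GdeltaLimit.
Context {X : Type} {op : (X -> Prop) -> Prop} {mul : X -> X -> X} {inv : X -> X} {e : X}
  (G : is_topological_group op mul inv e) (HT1 : T1 op) (HN : hereditarily_normal op)
  (s : nat -> X) (a : X) (Hsa : forall n, s n <> a) (Hconv : converges op s a).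

Lemma terms_closed_off (I : nat -> Prop) : closed_off op a (fun x => exists n, I n /\ x = s n).
Proof.
  apply (sequence_terms_closed_off _ (tg_top G) HT1); auto.
  apply (normal_hausdorff _ (tg_top G) HT1), hereditarily_normal_normal, HN.
Qed.

(* If NI is an open set containing the infinitely many terms s_n, n ∈ I, then
   some countable family of open neighbourhoods of a has its intersection inside
   NI ∪ {a}: separate these terms from X \ (NI ∪ {a}) by U and V in X \ {a} and
   take the translates (s_n a^-1)^-1 U; a point y outside NI ∪ {a} lies in V,
   so s_n a^-1 y ∈ V for large n. *)
Lemma half_gdelta (I : nat -> Prop) (NI : X -> Prop) :
  (forall N, exists n, (N <= n)%nat /\ I n) -> op NI -> (forall n, I n -> NI (s n)) ->
  exists W : nat -> X -> Prop, (forall k, op (W k) /\ W k a) /\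
    forall y, y <> a -> ~ NI y -> exists k, ~ W k y.
Proof.
  intros Hinf oNI HNI.
  pose proof (tg_top G) as T.
  destruct (punctured_normal op T HT1 a HN (fun x => exists n, I n /\ x = s n) (fun x => ~ NI x))
    as [U [V [oU [oV [HU [HV HUV]]]]]].
  - apply terms_closed_off.
  - exists NI; split; auto. intros; tauto.
  - intros x _ [n [In ->]] H. apply H; auto.
  - exists (fun n y => I n -> U (mul (mul (s n) (inv a)) y)). split.
    + intro k. split.
      * destruct (classic (I k)) as [Ik|nIk].
        -- apply (op_ext op (fun y => U (mul (mul (s k) (inv a)) y))); [intro; tauto|].
           apply (op_ltrans G); auto.
        -- apply (op_ext op (fun _ => True)); [intro; tauto|apply (top_full T)].
      * intro Ik. rewrite (mul_cancel_r G). apply HU; eauto.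
    + intros y hy nNy.
      assert (oR : op (fun g => V (mul g (mul (inv a) y)))) by (apply (op_rtrans G); auto).
      destruct (Hconv _ oR) as [N HNt].
      { rewrite (mul_cancel_l G). apply HV; auto. }
      destruct (Hinf N) as [n [Hn In]]. exists n. intro Wn.
      specialize (Wn In). rewrite <- (tg_assoc G) in Wn.
      apply (HUV _ Wn). apply HNt; auto.
Qed.

(* The limit of an injective convergent sequence is a G_delta point: the even
   and odd terms have disjoint open neighbourhoods N_even, N_odd, and
   (N_even ∪ {a}) ∩ (N_odd ∪ {a}) = {a}. *)
Lemma limit_gdelta : (forall n m, s n = s m -> n = m) -> gdelta_point op a.
Proof.
  intros Hinj.
  pose (IE := fun n => exists k, n = (2 * k)%nat).
  pose (IO := fun n => exists k, n = (2 * k + 1)%nat).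
  destruct (punctured_normal op (tg_top G) HT1 a HN
     (fun x => exists n, IE n /\ x = s n) (fun x => exists n, IO n /\ x = s n))
    as [NE [NO [oNE [oNO [HNE [HNO HEO]]]]]].
  - apply terms_closed_off.
  - apply terms_closed_off.
  - intros x _ [n [[k ->] ->]] [m [[k' ->] E]]. apply Hinj in E. lia.
  - destruct (half_gdelta IE NE) as [WE [HWE1 HWE2]]; auto.
    { intro N; exists (2 * N)%nat; split; [lia|exists N; auto]. }
    { intros n In. apply HNE; eauto. }
    destruct (half_gdelta IO NO) as [WO [HWO1 HWO2]]; auto.
    { intro N; exists (2 * N + 1)%nat; split; [lia|exists N; auto]. }
    { intros n In. apply HNO; eauto. }
    exists (fun k y => WE k y /\ WO k y). split.
    + intro k; destruct (HWE1 k), (HWO1 k); split; auto. apply (top_inter (tg_top G)); auto.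
    + intros y hy. destruct (classic (NE y)) as [Ey|nEy].
      * assert (nOy : ~ NO y) by (intro; apply (HEO y); auto).
        destruct (HWO2 y hy nOy) as [k Hk]. exists k; tauto.
      * destruct (HWE2 y hy nEy) as [k Hk]. exists k; tauto.
Qed.

End GdeltaLimit.

(* If rho is a nonnegative symmetric function vanishing on the
   diagonal and satisfying rho x w <= 2 max (rho x y, rho y z, rho z w), then the
   infimum of the lengths of rho-chains is a pseudometric d with
   rho / 2 <= d <= rho (Frink's metrization lemma). *)
Section ChainMetric.
Context {X : Type} (rho : X -> X -> R).
Hypothesis rho_nonneg : forall x y, 0 <= rho x y.

Fixpoint chain_sum (x : X) (l : list X) : R :=
  match l with nil => 0 | q :: l' => rho x q + chain_sum q l' end.
Fixpoint chain_end (x : X) (l : list X) : X :=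
  match l with nil => x | q :: l' => chain_end q l' end.

Lemma chain_sum_nonneg l x : 0 <= chain_sum x l.
Proof.
  revert x; induction l as [|q l IH]; intro x; simpl; [lra|].
  specialize (rho_nonneg x q); specialize (IH q); lra.
Qed.

Lemma chain_sum_app l1 l2 x :
  chain_sum x (l1 ++ l2) = chain_sum x l1 + chain_sum (chain_end x l1) l2.
Proof. revert x; induction l1; intro x; simpl; [lra|]. rewrite IHl1; lra. Qed.

Lemma chain_end_app (l1 l2 : list X) x : chain_end x (l1 ++ l2) = chain_end (chain_end x l1) l2.
Proof. revert x; induction l1; intro x; simpl; auto. Qed.

Lemma split_chain l x t : 0 <= t -> l <> nil -> exists l1 q l2, l = l1 ++ q :: l2 /\
  chain_sum x l1 <= t /\ chain_sum q l2 <= Rmax 0 (chain_sum x l - t).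
Proof.
  revert x t; induction l as [|q R IH]; intros x t Ht Hl; [congruence|].
  destruct (Rlt_le_dec t (rho x q)) as [h|h].
  - exists nil, q, R. simpl. repeat split; auto. eapply Rle_trans; [|apply Rmax_r]. lra.
  - destruct R as [|q' R'].
    + exists nil, q, nil. simpl. repeat split; auto. apply Rmax_l.
    + destruct (IH q (t - rho x q)) as [l1 [q2 [l2 [E [H1 H2]]]]]; [lra|congruence|].
      exists (q :: l1), q2, l2. rewrite E. simpl. repeat split; [lra|].
      rewrite E in H2. replace (rho x q + chain_sum q (l1 ++ q2 :: l2) - t)
        with (chain_sum q (l1 ++ q2 :: l2) - (t - rho x q)) by lra. auto.
Qed.

Hypothesis rho_refl : forall x, rho x x = 0.
Hypothesis rho_3step : forall x y z w, rho x w <= 2 * Rmax (rho x y) (Rmax (rho y z) (rho z w)).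

(* The key estimate: rho between the ends of a chain is at most twice its
   length (by strong induction, splitting the chain at its midpoint). *)
Lemma rho_le_chain n l x : (length l <= n)%nat -> rho x (chain_end x l) <= 2 * chain_sum x l.
Proof.
  revert l x; induction n as [|n IH]; intros l x Hlen.
  - destruct l; simpl in *; [rewrite rho_refl; lra|lia].
  - destruct l as [|q0 l0] eqn:El; [simpl; rewrite rho_refl; lra|].
    rewrite <- El in *. set (Sm := chain_sum x l).
    assert (HS : 0 <= Sm) by apply chain_sum_nonneg.
    destruct (split_chain l x (Sm / 2)) as [l1 [q [l2 [E [H1 H2]]]]]; [lra|subst l; congruence|].
    assert (Hl : length l = (length l1 + S (length l2))%nat) by (rewrite E, length_app; auto).
    assert (E2 : Sm = chain_sum x l1 + rho (chain_end x l1) q + chain_sum q l2).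
    { unfold Sm. rewrite E, chain_sum_app. simpl. lra. }
    assert (A1 : rho x (chain_end x l1) <= Sm).
    { eapply Rle_trans; [apply IH; lia|]. lra. }
    assert (A2 : rho (chain_end x l1) q <= Sm).
    { pose proof (chain_sum_nonneg l1 x); pose proof (chain_sum_nonneg l2 q); lra. }
    assert (A3 : rho q (chain_end q l2) <= Sm).
    { change (chain_sum x l) with Sm in H2.
      eapply Rle_trans; [apply IH; lia|]. rewrite Rmax_right in H2; lra. }
    replace (chain_end x l) with (chain_end q l2) by (rewrite E, chain_end_app; auto).
    eapply Rle_trans; [apply (rho_3step _ (chain_end x l1) q)|].
    apply Rmult_le_compat_l; [lra|]. apply Rmax_lub; auto. apply Rmax_lub; auto.
Qed.

(* The chain distance: the infimum of the lengths of chains from x to y,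
   obtained as minus the supremum of their negated lengths. *)
Definition neg_chain_lengths x y (r : R) : Prop :=
  exists l, chain_end x l = y /\ r = - chain_sum x l.
Definition chain_dist x y : R := - epsilon (inhabits 0) (is_lub (neg_chain_lengths x y)).

Lemma chain_dist_lub x y : is_lub (neg_chain_lengths x y) (- chain_dist x y).
Proof.
  unfold chain_dist. rewrite Ropp_involutive. apply epsilon_spec.
  destruct (completeness (neg_chain_lengths x y)) as [m Hm]; [| |exists m; exact Hm].
  - exists 0. intros r [l [_ ->]]. pose proof (chain_sum_nonneg l x). lra.
  - exists (- chain_sum x (y :: nil)). exists (y :: nil); auto.
Qed.

Lemma chain_dist_le x y l : chain_end x l = y -> chain_dist x y <= chain_sum x l.
Proof.
  intros H. destruct (chain_dist_lub x y) as [Hu _].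
  assert (- chain_sum x l <= - chain_dist x y) by (apply Hu; exists l; auto). lra.
Qed.

Lemma chain_dist_ge x y c :
  (forall l, chain_end x l = y -> c <= chain_sum x l) -> c <= chain_dist x y.
Proof.
  intros H. destruct (chain_dist_lub x y) as [_ Hl].
  assert (- chain_dist x y <= - c). { apply Hl. intros r [l [E ->]]. specialize (H l E). lra. }
  lra.
Qed.

Lemma chain_dist_nonneg x y : 0 <= chain_dist x y.
Proof. apply chain_dist_ge. intros l _. apply chain_sum_nonneg. Qed.

Lemma chain_dist_le_rho x y : chain_dist x y <= rho x y.
Proof.
  eapply Rle_trans; [apply (chain_dist_le x y (y :: nil)); auto|]. simpl; lra.
Qed.

Lemma rho_le_chain_dist x y : rho x y <= 2 * chain_dist x y.
Proof.
  cut (rho x y / 2 <= chain_dist x y); [lra|]. apply chain_dist_ge.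
  intros l E. subst y. pose proof (rho_le_chain (length l) l x (le_n _)). lra.
Qed.

Lemma chain_dist_triangle x y z : chain_dist x z <= chain_dist x y + chain_dist y z.
Proof.
  cut (chain_dist x z - chain_dist y z <= chain_dist x y); [lra|].
  apply chain_dist_ge. intros l1 E1.
  cut (chain_dist x z - chain_sum x l1 <= chain_dist y z); [lra|].
  apply chain_dist_ge. intros l2 E2.
  cut (chain_dist x z <= chain_sum x (l1 ++ l2)); [rewrite chain_sum_app, E1; lra|].
  apply chain_dist_le. rewrite chain_end_app, E1; auto.
Qed.

Hypothesis rho_sym : forall x y, rho x y = rho y x.

Lemma chain_reverse l x :
  exists l', chain_end (chain_end x l) l' = x /\ chain_sum (chain_end x l) l' = chain_sum x l.
Proof.
  revert x; induction l as [|q r IH]; intro x.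
  - exists nil; simpl; auto.
  - destruct (IH q) as [r' [E1 E2]]. exists (r' ++ x :: nil). simpl.
    rewrite chain_end_app, chain_sum_app, E1, E2. simpl. rewrite (rho_sym q x). split; [auto|lra].
Qed.

Lemma chain_dist_sym x y : chain_dist x y = chain_dist y x.
Proof.
  assert (H : forall x y, chain_dist y x <= chain_dist x y).
  { intros u v. apply chain_dist_ge. intros l E. subst v.
    destruct (chain_reverse l u) as [l' [E1 E2]]. rewrite <- E2. apply chain_dist_le; auto. }
  pose proof (H x y); pose proof (H y x); lra.
Qed.

End ChainMetric.

Lemma half_pow_pos n : 0 < (/2)^n.
Proof. apply pow_lt; lra. Qed.

Lemma half_pow_S n : (/2)^(S n) = (/2)^n / 2.
Proof. simpl; lra. Qed.

Lemma half_pow_le n m : (n <= m)%nat -> (/2)^m <= (/2)^n.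
Proof.
  induction 1; [lra|]. rewrite half_pow_S. pose proof (half_pow_pos m); lra.
Qed.

Lemma half_pow_small eps : 0 < eps -> exists k, (/2)^k < eps.
Proof.
  intro H. destruct (pow_lt_1_zero (/2)) with (y := eps) as [N HN]; auto.
  - rewrite Rabs_right; lra.
  - exists N. specialize (HN N (le_n _)). rewrite Rabs_right in HN; auto.
    left; apply half_pow_pos.
Qed.

Record dyadic_base {X : Type} (op : (X -> Prop) -> Prop) (mul : X -> X -> X) (inv : X -> X)
  (e : X) (B : nat -> X -> Prop) : Prop := {
  db_open : forall k, op (B k);
  db_e : forall k, B k e;
  db_sym : forall k a, B k a -> B k (inv a);
  db_cube : forall k a b c, B (S k) a -> B (S k) b -> B (S k) c -> B k (mul (mul a b) c);
  db_local_base : forall U, op U -> U e -> exists k, forall g, B k g -> U g }.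

(* In a first-countable topological group a dyadic base exists: B_(k+1) is a
   symmetric cube root of B_k ∩ D_k, for a countable local base D at e. *)
Lemma dyadic_base_exists {X : Type} {op : (X -> Prop) -> Prop} {mul : X -> X -> X}
  {inv : X -> X} {e : X} : is_topological_group op mul inv e ->
  first_countable_at op e -> exists B, dyadic_base op mul inv e B.
Proof.
  intros G [D [HD Hbase]]. pose proof (tg_top G) as T.
  pose (cube_root := fun (W V : X -> Prop) => (op W /\ W e) -> op V /\ V e /\
     (forall a, V a -> V (inv a)) /\ forall a b c, V a -> V b -> V c -> W (mul (mul a b) c)).
  assert (Hex : forall W, exists V, cube_root W V).
  { intro W. destruct (classic (op W /\ W e)) as [[oW We]|Hn].
    - destruct (nbhd_cube G W oW We) as [V HV]. exists V; intros _; auto.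
    - exists W; intro h; contradiction. }
  destruct (choice _ Hex) as [root Hroot].
  pose (B := fix B k := match k with O => fun _ : X => True
                                    | S k => root (fun g => B k g /\ D k g) end).
  assert (HB1 : forall k, op (B k) /\ B k e /\ forall a, B k a -> B k (inv a)).
  { induction k as [|k [o1 [e1 s1]]].
    - simpl. repeat split; auto. apply (top_full T).
    - destruct (Hroot (fun g => B k g /\ D k g)) as [h1 [h2 [h3 h4]]];
        [split; [apply (top_inter T); auto; apply HD|split; auto; apply HD]|].
      simpl; auto. }
  assert (HB2 : forall k a b c, B (S k) a -> B (S k) b -> B (S k) c ->
     B k (mul (mul a b) c) /\ D k (mul (mul a b) c)).
  { intros k. destruct (HB1 k) as [o1 [e1 s1]].
    destruct (Hroot (fun g => B k g /\ D k g)) as [h1 [h2 [h3 h4]]];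
      [split; [apply (top_inter T); auto; apply HD|split; auto; apply HD]|].
    intros a b c Ha Hb Hc. apply h4; auto. }
  exists B. constructor; try apply HB1; try apply HB2.
  intros U oU Ue. destruct (Hbase U oU Ue) as [n Hn]. exists (S n). intros g Hg.
  apply Hn. destruct (HB2 n g e e Hg (proj1 (proj2 (HB1 _))) (proj1 (proj2 (HB1 _)))) as [_ Hd].
  rewrite !(tg_unit_r G) in Hd; auto.
Qed.

Definition dyadic_level {X : Type} (B : nat -> X -> Prop) (g : X) (r : R) : Prop :=
  (r = 0 /\ forall k, B k g) \/
  (exists m, r = (/2)^m /\ ~ B m g /\ forall k, (k < m)%nat -> B k g).

Definition dyadic_norm {X : Type} (B : nat -> X -> Prop) (g : X) : R :=
  epsilon (inhabits 0) (dyadic_level B g).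

Lemma dyadic_norm_spec {X : Type} (B : nat -> X -> Prop) g : dyadic_level B g (dyadic_norm B g).
Proof.
  unfold dyadic_norm; apply epsilon_spec.
  destruct (classic (forall k, B k g)) as [H|H]; [exists 0; left; auto|].
  apply not_all_ex_not in H.
  destruct (dec_inh_nat_subset_has_unique_least_element (fun k => ~ B k g)) as [m [[Hm Hl] _]];
    [intro; apply classic|auto|].
  exists ((/2)^m); right; exists m; repeat split; auto.
  intros k Hk. apply NNPP; intro Hn. specialize (Hl k Hn). lia.
Qed.

Lemma dyadic_level_unique {X : Type} (B : nat -> X -> Prop) g r1 r2 :
  dyadic_level B g r1 -> dyadic_level B g r2 -> r1 = r2.
Proof.
  intros [[-> H1]|[m1 [-> [H1 H1']]]] [[-> H2]|[m2 [-> [H2 H2']]]]; auto.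
  - exfalso; auto.
  - exfalso; auto.
  - destruct (Nat.lt_trichotomy m1 m2) as [h|[h|h]].
    + exfalso; apply H1; auto.
    + subst; auto.
    + exfalso; apply H2; auto.
Qed.

Lemma dyadic_norm_nonneg {X : Type} (B : nat -> X -> Prop) g : 0 <= dyadic_norm B g.
Proof.
  destruct (dyadic_norm_spec B g) as [[-> _]|[m [-> _]]]; [lra|left; apply half_pow_pos].
Qed.

Lemma mem_of_dyadic_norm_lt {X : Type} (B : nat -> X -> Prop) k g :
  dyadic_norm B g < (/2)^k -> B k g.
Proof.
  intros Hk. destruct (dyadic_norm_spec B g) as [[Hr H]|[m [Hr [H1 H2]]]]; auto.
  rewrite Hr in Hk. apply H2. destruct (Compare_dec.le_lt_dec m k) as [h|h]; auto.
  pose proof (half_pow_le _ _ h); lra.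
Qed.

Lemma dyadic_norm_zero {X : Type} (B : nat -> X -> Prop) g :
  dyadic_norm B g = 0 -> forall k, B k g.
Proof.
  intro H0. destruct (dyadic_norm_spec B g) as [[_ H]|[m [Hm _]]]; auto.
  pose proof (half_pow_pos m); lra.
Qed.

Section DyadicNorm.
Context {X : Type} {op : (X -> Prop) -> Prop} {mul : X -> X -> X} {inv : X -> X} {e : X}
  (G : is_topological_group op mul inv e) (B : nat -> X -> Prop)
  (HB : dyadic_base op mul inv e B).

Lemma dyadic_base_antitone k m g : (k <= m)%nat -> B m g -> B k g.
Proof.
  induction 1 as [|m _ IH]; auto.
  intro Hg. apply IH. pose proof (db_cube _ _ _ _ _ HB m g e e Hg (db_e _ _ _ _ _ HB _) (db_e _ _ _ _ _ HB _)) as H.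
  rewrite !(tg_unit_r G) in H; auto.
Qed.

Lemma dyadic_norm_le_of_mem k g : B k g -> dyadic_norm B g <= (/2)^(S k).
Proof.
  intros Hk. destruct (dyadic_norm_spec B g) as [[Hr _]|[m [Hr [H1 H2]]]]; rewrite Hr.
  - left; apply half_pow_pos.
  - apply half_pow_le. destruct (Compare_dec.le_lt_dec m k) as [h|h]; [|lia].
    exfalso; apply H1. apply (dyadic_base_antitone m k); auto.
Qed.

Lemma dyadic_norm_e : dyadic_norm B e = 0.
Proof.
  apply (dyadic_level_unique B e); [apply dyadic_norm_spec|].
  left; split; auto. apply (db_e _ _ _ _ _ HB).
Qed.

Lemma dyadic_norm_inv g : dyadic_norm B (inv g) = dyadic_norm B g.
Proof.
  apply (dyadic_level_unique B (inv g)); [apply dyadic_norm_spec|].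
  assert (Hiff : forall k, B k g <-> B k (inv g)).
  { intro k; split; [apply (db_sym _ _ _ _ _ HB)|]. intro h.
    rewrite <- (inv_inv G g). apply (db_sym _ _ _ _ _ HB); auto. }
  destruct (dyadic_norm_spec B g) as [[Hr H]|[m [Hr [H1 H2]]]].
  - left; split; auto. intro k; apply Hiff; auto.
  - right; exists m; repeat split; auto.
    + rewrite <- Hiff; auto.
    + intros k Hk; apply Hiff; auto.
Qed.

Lemma dyadic_norm_cube a b c :
  dyadic_norm B (mul (mul a b) c) <=
  2 * Rmax (dyadic_norm B a) (Rmax (dyadic_norm B b) (dyadic_norm B c)).
Proof.
  set (M := Rmax (dyadic_norm B a) (Rmax (dyadic_norm B b) (dyadic_norm B c))).
  assert (Ha : dyadic_norm B a <= M) by (unfold M; apply Rmax_l).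
  assert (Hb : dyadic_norm B b <= M) by (unfold M; eapply Rle_trans; [apply Rmax_l|apply Rmax_r]).
  assert (Hc : dyadic_norm B c <= M) by (unfold M; eapply Rle_trans; [apply Rmax_r|apply Rmax_r]).
  pose proof (dyadic_norm_nonneg B a).
  destruct (Rle_lt_dec (dyadic_norm B (mul (mul a b) c)) (2 * M)) as [h|h]; auto. exfalso.
  destruct (dyadic_norm_spec B (mul (mul a b) c)) as [[Hr _]|[p [Hp [H1 _]]]]; [lra|].
  apply H1. apply (db_cube _ _ _ _ _ HB); apply mem_of_dyadic_norm_lt; rewrite half_pow_S; lra.
Qed.

Definition dyadic_quasi_dist (x y : X) : R := dyadic_norm B (mul (inv x) y).

Lemma dyadic_quasi_dist_nonneg x y : 0 <= dyadic_quasi_dist x y.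
Proof. apply dyadic_norm_nonneg. Qed.

Lemma dyadic_quasi_dist_refl x : dyadic_quasi_dist x x = 0.
Proof. unfold dyadic_quasi_dist; rewrite (tg_inv_l G). apply dyadic_norm_e. Qed.

Lemma dyadic_quasi_dist_sym x y : dyadic_quasi_dist x y = dyadic_quasi_dist y x.
Proof. unfold dyadic_quasi_dist. rewrite <- (inv_mul_sym G). apply dyadic_norm_inv. Qed.

Lemma dyadic_quasi_dist_3step x y z w : dyadic_quasi_dist x w <=
  2 * Rmax (dyadic_quasi_dist x y) (Rmax (dyadic_quasi_dist y z) (dyadic_quasi_dist z w)).
Proof. unfold dyadic_quasi_dist. rewrite <- (mul_telescope G x y z w). apply dyadic_norm_cube. Qed.

Lemma dyadic_quasi_dist_eq0 : T1 op -> forall x y, dyadic_quasi_dist x y = 0 -> x = y.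
Proof.
  intros HT1 x y H. pose proof (dyadic_norm_zero B _ H) as Hk.
  assert (Hg : mul (inv x) y = e).
  { apply NNPP; intro Hne. destruct (HT1 e _ (not_eq_sym Hne)) as [U [oU [Ue nU]]].
    destruct (db_local_base _ _ _ _ _ HB U oU Ue) as [k Hk']. apply nU, Hk', Hk. }
  rewrite <- (mul_cancel_l G x y), Hg. symmetry. apply (tg_unit_r G).
Qed.

(* The chain metric of the quasi-distance induces the topology: a ball of
   radius 2^-(k+1) contains the translate x B_(k+1), and is contained in x B_k. *)
Lemma dyadic_base_metrizable : T1 op -> metrizable op.
Proof.
  intros HT1.
  pose (d := chain_dist dyadic_quasi_dist).
  pose proof (chain_dist_le_rho _ dyadic_quasi_dist_nonneg) as Hdr.
  pose proof (rho_le_chain_dist _ dyadic_quasi_dist_nonneg dyadic_quasi_dist_refl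
    dyadic_quasi_dist_3step) as Hrd.
  exists d. split; [|split; [|split]].
  - intros x y; split.
    + intro H. apply (dyadic_quasi_dist_eq0 HT1). specialize (Hrd x y).
      pose proof (dyadic_quasi_dist_nonneg x y). unfold d in H. lra.
    + intros ->. specialize (Hdr y y). rewrite dyadic_quasi_dist_refl in Hdr.
      pose proof (chain_dist_nonneg _ dyadic_quasi_dist_nonneg y y). unfold d. lra.
  - apply chain_dist_sym; [apply dyadic_quasi_dist_nonneg|apply dyadic_quasi_dist_sym].
  - apply chain_dist_triangle, dyadic_quasi_dist_nonneg.
  - intro U; split.
    + intros oU x Ux.
      assert (We : U (mul x e)) by (rewrite (tg_unit_r G); auto).
      destruct (db_local_base _ _ _ _ _ HB _ (op_ltrans G x U oU) We) as [k Hk].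
      exists ((/2)^k / 2). split; [pose proof (half_pow_pos k); lra|].
      intros y Hy. rewrite <- (mul_cancel_l G x y). apply Hk.
      apply mem_of_dyadic_norm_lt. change (dyadic_quasi_dist x y < (/2)^k).
      specialize (Hrd x y). unfold d in Hy. lra.
    + intros H. apply (op_local _ (tg_top G)). intros x Ux.
      destruct (H x Ux) as [eps [Heps Hb]].
      destruct (half_pow_small eps Heps) as [k Hk].
      exists (fun y => B k (mul (inv x) y)). split; [|split].
      * apply (op_ltrans G), (db_open _ _ _ _ _ HB).
      * rewrite (tg_inv_l G). apply (db_e _ _ _ _ _ HB).
      * intros y Hy. apply Hb. pose proof (dyadic_norm_le_of_mem k _ Hy) as Hn.
        change (dyadic_quasi_dist x y <= (/2)^(S k)) in Hn.
        specialize (Hdr x y). rewrite half_pow_S in Hn.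
        pose proof (half_pow_pos k). unfold d. lra.
Qed.

End DyadicNorm.

Lemma birkhoff_kakutani {X : Type} {op : (X -> Prop) -> Prop} {mul : X -> X -> X}
  {inv : X -> X} {e : X} : is_topological_group op mul inv e -> T1 op ->
  first_countable_at op e -> metrizable op.
Proof.
  intros G HT1 Hfc. destruct (dyadic_base_exists G Hfc) as [B HB].
  apply (dyadic_base_metrizable G B HB HT1).
Qed.

Theorem corollary2p5 (X : Type) (op : (X -> Prop) -> Prop)
  (mul : X -> X -> X) (inv : X -> X) (e : X) :
  is_topological_group op mul inv e ->
  T1 op ->
  countably_compact op ->
  hereditarily_normal op ->
  has_nontrivial_convergent_sequence op ->
  metrizable op.
Proof.
  intros G HT1 HC HN Hseq.
  destruct (nontrivial_sequence op Hseq) as [s [a [Hsa [Hinj Hconv]]]].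
  assert (Ha : gdelta_point op a) by exact (limit_gdelta G HT1 HN s a Hsa Hconv Hinj).
  assert (Hfc : first_countable_at op a).
  { apply (gdelta_first_countable op (tg_top G) HT1); auto.
    apply hereditarily_normal_normal, HN. }
  apply (birkhoff_kakutani G HT1), (first_countable_translate G a Hfc).
Qed.
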